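(* Fix $0<R<1$, $\varepsilon>0$ with $1-R-\varepsilon>0$, a positive integer $\ell$, and let $q$ be a prime power with $q\ge \max\left(\ell^{\frac{8R}{\varepsilon}+6},\ \ell\cdot 2^{4/\varepsilon}\right)$. Let $\mathcal{C}\subseteq \mathbb{F}_q^n$ be a random linear code of rate $R$. Then with probability at least $1-2q^{-\varepsilon n/8}$, $\mathcal{C}$ is $\left(1-R-\varepsilon,\ \ell,\ L\right)$-list-recoverable with $L\le \left(\frac{2\ell}{\varepsilon}\right)^{2\ell/\varepsilon}$.
   Context: A random linear code (RLC) of rate $R$ in $\mathbb{F}_q^n$ is the column span of a generator matrix $\mathbf{G}\in\mathbb{F}_q^{n\times Rn}$ whose entries are independent and uniformly random elements of $\mathbb{F}_q$ (here $Rn$ is an integer). For $x\in\mathbb{F}_q^n$ and sets $S_1,\dots,S_n\subseteq\mathbb{F}_q$, the agreement set is $\{i\in[n]: x[i]\in S_i\}$. The $\rho$-radius $\ell$-list-recovery ball $B(\rho,S_1\times\cdots\times S_n)$, for sets $S_i$ of size $\ell$, is the set of $x\in\mathbb{F}_q^n$ whose agreement set with $S_1,\dots,S_n$ has size at least $(1-\rho)n$. A code $\mathcal{C}\subseteq\mathbb{F}_q^n$ is $(\rho,\ell,L)$-list-recoverable if every $\rho$-radius $\ell$-list-recovery ball contains at most $L$ codewords of $\mathcal{C}$. *)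

From HB Require Import structures.
From mathcomp Require Import all_boot all_order all_algebra all_field.
From mathcomp Require Import reals exp.
Set Implicit Arguments. Unset Strict Implicit. Unset Printing Implicit Defensive.
Import Order.TTheory GRing.Theory Num.Theory.
Local Open Scope ring_scope.

Section ListRecovery.
Variables (R : realType) (F : finFieldType) (n : nat).

Definition col_span_code k (G : 'M[F]_(n, k)) : {set 'cV[F]_n} :=
  [set G *m m | m : 'cV[F]_k].

Definition agreement (S : {ffun 'I_n -> {set F}}) (x : 'cV[F]_n) : {set 'I_n} :=
  [set i | x i 0 \in S i].

Definition in_lr_ball (rho : R) (S : {ffun 'I_n -> {set F}}) (x : 'cV[F]_n) : bool :=
  (1 - rho) * n%:R <= (#|agreement S x|)%:R.

Definition list_recoverable (rho : R) (l : nat) (L : R) (C : {set 'cV[F]_n}) : bool :=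
  [forall S : {ffun 'I_n -> {set F}},
     [forall i, #|S i| == l] ==>
     ((#|[set x in C | in_lr_ball rho S x]|)%:R <= L)].

End ListRecovery.

From HB Require Import structures.
From mathcomp Require Import all_boot all_order all_algebra all_field.
From mathcomp Require Import reals sequences exp.
From mathcomp Require Import ring lra.
Set Implicit Arguments. Unset Strict Implicit. Unset Printing Implicit Defensive.
Import Order.TTheory GRing.Theory Num.Theory.
Local Open Scope ring_scope.

(* A code is list-recoverable once it avoids two bad events. First, no nonzero
   codeword has (r + eps/2) n zeros or more. Then fewer than (r + eps/2) n
   coordinates vanish on a nonzero subspace U of the code, so a word of y + U
   agreeing with the lists S_i on (r + eps) n coordinates agrees with them on
   eps n / 2 coordinates where U does not vanish; fixing one such coordinate to
   one of its l allowed values cuts the dimension, and by induction there are at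
   most (2 l / eps) ^ dim U such words. Second, no d + 1 = trunc (2 l / eps) + 1
   independent codewords agree with a common list on (r + eps) n coordinates;
   hence the codewords of a ball span at most d dimensions. Union bounds over
   low-weight vectors, and over lists and (d + 1)-tuples of agreeing vectors,
   show that each event has probability at most q ^ (- eps n / 8), given the two
   lower bounds on q. *)

Lemma leq_card_cover (T I : finType) (P : {pred I}) (A : I -> {set T}) (B : {set T}) :
  (forall x, x \in B -> exists2 i, i \in P & x \in A i) ->
  (#|B| <= \sum_(i in P) #|A i|)%N.
Proof.
move=> coverB; apply: (@leq_trans #|\bigcup_(i in P) A i|).
  by apply/subset_leq_card/subsetP => x /coverB [i Pi Aix]; apply/bigcupP; exists i.
elim/big_ind2: _ => [|A1 n1 A2 n2 le1 le2 | //]; first by rewrite cards0.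
exact: leq_trans (leq_card_setU _ _) (leq_add le1 le2).
Qed.

Lemma leq_card_cover3 (T : finType) (A B C : {set T}) :
  (forall x, x \notin B -> x \notin C -> x \in A) -> (#|T| <= #|A| + #|B| + #|C|)%N.
Proof.
move=> ABC; rewrite -addnA -(cardsC A) leq_add2l; apply: leq_trans (leq_card_setU B C).
apply/subset_leq_card/subsetP => x; rewrite in_setC in_setU; apply: contraNT.
by rewrite negb_or => /andP [/ABC xBC /xBC].
Qed.

Lemma card_cover_ler (R : realType) (T I : finType) (P : {set I}) (A : I -> {set T})
    (B : {set T}) (c : R) :
  (forall x, x \in B -> exists2 i, i \in P & x \in A i) ->
  (forall i, i \in P -> (#|A i|)%:R <= c) ->
  (#|B|)%:R <= (#|P|)%:R * c.
Proof.
move=> coverB A_le; apply: le_trans (_ : (\sum_(i in P) #|A i|)%:R <= _).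
  by rewrite ler_nat leq_card_cover.
by rewrite natr_sum mulr_natl -sumr_const; apply: ler_sum.
Qed.

Lemma prod_nat_if (I : finType) (A : {pred I}) a b :
  (\prod_i (if i \in A then a else b) = a ^ #|A| * b ^ (#|I| - #|A|))%N.
Proof.
rewrite (bigID (mem A)) /= -(cardC A) addKn -!prod_nat_const.
by congr (_ * _)%N; apply: eq_bigr => i; [move=> -> | move=> /negbTE ->].
Qed.

Lemma card_row_box (T : finType) n (A : 'I_n -> {set T}) :
  #|[set v : 'rV[T]_n | [forall i, v 0 i \in A i]]| = (\prod_i #|A i|)%N.
Proof.
pose f (v : 'rV[T]_n) : {ffun 'I_n -> T} := [ffun i => v 0 i].
have f_inj : injective f.
  by move=> u v /ffunP eq_uv; apply/rowP => i; have := eq_uv i; rewrite !ffunE.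
have -> : (\prod_i #|A i| = #|family (fun i => mem (A i))|)%N.
  by rewrite card_family foldrE big_map big_enum.
rewrite -(card_imset _ f_inj); apply: eq_card => g.
apply/imsetP/familyP => [[v] | Ag].
  by rewrite inE => /forallP Av -> i; rewrite ffunE; apply: Av.
exists (\row_i g i); last by apply/ffunP => i; rewrite !ffunE mxE.
by rewrite inE; apply/forallP => i; rewrite mxE; apply: Ag.
Qed.

Lemma card_rows_in (T : finType) d n (B : {set 'rV[T]_n}) :
  (#|[set M : 'M[T]_(d, n) | [forall i, row i M \in B]]| <= #|B| ^ d)%N.
Proof.
pose f (M : 'M[T]_(d, n)) : {ffun 'I_d -> 'rV[T]_n} := [ffun i => row i M].
have f_inj : injective f.
  by move=> M1 M2 /ffunP eqM; apply/row_matrixP => i; have := eqM i; rewrite !ffunE.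
rewrite -(card_imset _ f_inj) -[X in (_ <= _ ^ X)%N]card_ord -card_ffun_on.
apply: subset_leq_card; apply/subsetP => g /imsetP [M]; rewrite inE => /forallP BM ->.
by apply/ffun_onP => i; rewrite ffunE; apply: BM.
Qed.

Lemma bin_leq_expn a b : ('C(a, b) <= a ^ b)%N.
Proof.
apply: (@leq_trans ('C(a, b) * b`!)); first by rewrite leq_pmulr ?fact_gt0.
rewrite bin_ffact ffact_prod -[X in (_ <= _ ^ X)%N](card_ord b) -prod_nat_const.
by apply: leq_prod => i _; apply: leq_subr.
Qed.

Definition lists (T : finType) n l := [set S : {ffun 'I_n -> {set T}} | [forall i, #|S i| == l]].

Lemma card_lists (T : finType) n l : #|lists T n l| = ('C(#|T|, l) ^ n)%N.
Proof.
rewrite -card_draws -[X in (_ ^ X)%N](card_ord n) -card_ffun_on.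
by apply: eq_card => S; rewrite inE; apply/forallP/ffun_onP => S_l i; move: (S_l i); rewrite inE.
Qed.

Lemma card_sets (T : finType) : #|{: {set T}}| = (2 ^ #|T|)%N.
Proof. by have := card_powerset [set: T]; rewrite powersetT !cardsT. Qed.

Lemma exprn_expR (R : realType) (x : R) m : 0 < x -> x ^+ m = expR (m%:R * ln x).
Proof. by move=> x_gt0; rewrite expRM_natl lnK. Qed.

Section Agreement.
Variables (T : finType) (n : nat).

Definition agree (S : 'I_n -> {set T}) (v : 'rV[T]_n) : {set 'I_n} :=
  [set i | v 0 i \in S i].

Lemma card_agree_in (S : 'I_n -> {set T}) (P : {pred {set 'I_n}}) :
  (#|[set v | agree S v \in P]| <=
    \sum_(A in P) \prod_i (if i \in A then #|S i| else #|T|))%N.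
Proof.
pose box (A : {set 'I_n}) :=
  [set v : 'rV[T]_n | [forall i, v 0 i \in if i \in A then S i else setT]].
apply: (@leq_trans (\sum_(A in P) #|box A|)%N).
  apply: leq_card_cover => v; rewrite inE => Pv; exists (agree S v) => //.
  by rewrite inE; apply/forallP => i; case: ifP; rewrite ?inE.
apply: leq_sum => A _; rewrite card_row_box; apply: leq_prod => i _.
by case: ifP; rewrite ?cardsT.
Qed.

Lemma card_agree_ge (R : realType) (S : 'I_n -> {set T}) (l : nat) (t : R) :
  (0 < l)%N -> (l <= #|T|)%N -> (forall i, #|S i| <= l)%N ->
  (#|[set v | t <= (#|agree S v|)%:R]|)%:R <=
    2 ^+ n * expR (t * ln (l%:R : R) + (n%:R - t) * ln (#|T|%:R : R)).
Proof.
move=> l_gt0 l_le_T S_le_l.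
have T_gt0 := leq_trans l_gt0 l_le_T.
have ln_l_le : ln (l%:R : R) <= ln (#|T|%:R) by rewrite ler_ln ?posrE ?ler_nat ?ltr0n.
pose P : {pred {set 'I_n}} := fun A => t <= (#|A|)%:R.
have : (#|[set v | agree S v \in P]| <= \sum_(A in P) l ^ #|A| * #|T| ^ (n - #|A|))%N.
  apply: leq_trans (card_agree_in S P) _; apply: leq_sum => A _.
  rewrite -[X in (_ ^ (X - _))%N](card_ord n) -prod_nat_if.
  by apply: leq_prod => i _; case: ifP.
rewrite -(ler_nat R) natr_sum => /le_trans; apply.
apply: le_trans (_ : \sum_(A in P) expR (t * ln (l%:R : R) + (n%:R - t) * ln (#|T|%:R)) <= _).
  apply: ler_sum => A t_le_A; have {}t_le_A : t <= #|A|%:R := t_le_A.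
  have A_le_n : (#|A| <= n)%N by rewrite -[X in (_ <= X)%N](card_ord n) max_card.
  rewrite natrM !natrX !exprn_expR ?ltr0n // -expRD ler_expR natrB //; nra.
rewrite sumr_const -[_ *+ #|P|]mulr_natl; apply: ler_wpM2r; first exact: expR_ge0.
by rewrite -natrX ler_nat -[X in (_ <= 2 ^ X)%N](card_ord n) -card_sets max_card.
Qed.

End Agreement.

Lemma row_free_rowsub (F : fieldType) m n d (A : 'M[F]_(m, n)) (f : 'I_d -> 'I_m) :
  row_free A -> injective f -> row_free (rowsub f A).
Proof.
move=> /row_freeP [B AB] f_inj; apply/row_freeP.
exists (B *m (rowsub f (1%:M : 'M[F]_m))^T).
rewrite rowsubE -mulmxA (mulmxA A) AB mul1mx.
apply/matrixP => i j; rewrite !mxE (bigD1 (f i)) //= big1 => [|a /negbTE a_fi].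
  by rewrite !mxE eqxx mul1r addr0 (inj_eq f_inj) eq_sym.
by rewrite !mxE eq_sym a_fi mul0r.
Qed.

Section FinFieldMatrices.
Variable F : finFieldType.
Local Notation q := #|F|.

Let q_gt0 : (0 < q)%N := ltnW (card_finNzRing_gt1 F).

Lemma card_submx n k m (K : 'M[F]_(m, k)) :
  #|[set H : 'M[F]_(n, k) | (H <= K)%MS]| = (q ^ (n * \rank K))%N.
Proof.
rewrite -card_mx -(card_imset _ (row_free_inj (row_base_free K))).
apply: eq_card => H; rewrite inE -(eq_row_base K); apply/idP/imsetP.
  by move=> /submxP [B ->]; exists B.
by move=> [B _ ->]; apply: submxMl.
Qed.

Lemma card_mulmx_eq d k n (M : 'M[F]_(d, k)) (T : 'M[F]_(d, n)) :
  (#|[set H : 'M[F]_(k, n) | M *m H == T]| <= q ^ (n * (k - \rank M)))%N.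
Proof.
have [-> | [H0]] := set_0Vmem [set H : 'M[F]_(k, n) | M *m H == T]; first by rewrite cards0.
rewrite inE => /eqP MH0.
rewrite -mxrank_tr -mxrank_ker -card_submx.
have shift_inj : injective (fun H : 'M[F]_(k, n) => (H - H0)^T).
  by move=> H1 H2 /trmx_inj /addIr.
rewrite -(card_imset _ shift_inj); apply: subset_leq_card.
apply/subsetP => K /imsetP [H]; rewrite inE => /eqP MH ->.
by rewrite inE; apply/sub_kermxP; rewrite -trmx_mul mulmxBr MH MH0 subrr trmx0.
Qed.

Lemma card_supmx d k n (T : 'M[F]_(d, n)) : row_free T ->
  (#|[set H : 'M[F]_(k, n) | (T <= H)%MS]| <= q ^ (d * k) * q ^ (n * (k - d)))%N.
Proof.
move=> T_free.
pose sols M := [set H : 'M[F]_(k, n) | M *m H == T].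
apply: (@leq_trans (\sum_(M : 'M[F]_(d, k) | sols M != set0) #|sols M|)%N).
  apply: leq_card_cover => H; rewrite inE => /submxP [M HM].
  by exists M; [apply/set0Pn; exists H | ]; rewrite inE HM.
apply: (@leq_trans (\sum_(M : 'M[F]_(d, k) | sols M != set0) q ^ (n * (k - d)))%N).
  apply: leq_sum => M /set0Pn [H]; rewrite inE => /eqP MH.
  apply: leq_trans (card_mulmx_eq _ _) (leq_pexp2l q_gt0 _).
  rewrite leq_mul2l leq_sub2l ?orbT //.
  by have := mxrankM_maxl M H; rewrite MH (eqP T_free).
by rewrite sum_nat_const leq_mul2r; apply/orP; right; rewrite -card_mx max_card.
Qed.

Lemma card_trmx_supmx (R : realType) d k n (T : 'M[F]_(d, n)) : row_free T ->
  (#|[set G : 'M[F]_(n, k) | (T <= G^T)%MS]|)%:R <=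
    expR ((d%:R * k%:R + n%:R * k%:R - n%:R * d%:R) * ln (q%:R : R)).
Proof.
move=> T_free; have [d_le_k | k_lt_d] := leqP d k; last first.
  suff -> : [set G : 'M[F]_(n, k) | (T <= G^T)%MS] = set0 by rewrite cards0 expR_ge0.
  apply/setP => G; rewrite !inE; apply/negbTE/negP => /mxrankS.
  by rewrite (eqP T_free) => /leq_trans /(_ (rank_leq_row _)); rewrite leqNgt k_lt_d.
apply: le_trans (_ : ((q ^ (d * k) * q ^ (n * (k - d)))%N)%:R <= _).
  rewrite ler_nat -(card_imset _ (@trmx_inj _ n k)); apply: leq_trans (card_supmx k T_free).
  by apply: subset_leq_card; apply/subsetP => H /imsetP [G]; rewrite !inE => TG ->.
by rewrite natrM !natrX !exprn_expR ?ltr0n // -expRD !natrM natrB // ler_expR; lra.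
Qed.

End FinFieldMatrices.

Lemma mxrank_cap_ker_col_lt (F : fieldType) m n (U : 'M[F]_(m, n)) i :
  col i U != 0 -> (\rank (U :&: kermx (delta_mx i ord0 : 'M[F]_(n, 1)))%MS < \rank U)%N.
Proof.
move=> Ui_nz; set e := delta_mx i ord0.
have [le_rk eq_rk] := mxrank_leqif_sup (capmxSl U (kermx e)).
rewrite ltn_neqAle le_rk andbT eq_rk; move: Ui_nz; apply: contra => U_sub_cap.
have /sub_kermxP : (U <= kermx e)%MS := submx_trans U_sub_cap (capmxSr _ _).
by rewrite -colE => ->.
Qed.

Lemma sum_card_agree_setD (T : finType) n (S : 'I_n -> {set T}) (P : {set 'rV[T]_n})
    (Z : {set 'I_n}) :
  (\sum_(p in P) #|agree S p :\: Z| <=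
    \sum_(i in ~: Z) \sum_(s in S i) #|[set p in P | p ord0 i == s]|)%N.
Proof.
have card_setD p : #|agree S p :\: Z| = (\sum_(i in ~: Z) (p ord0 i \in S i))%N.
  rewrite -sum1_card big_mkcond [RHS]big_mkcond; apply: eq_bigr => i _.
  by rewrite !inE andbC; case: (i \in Z); case: (p ord0 i \in S i).
under eq_bigr => p _ do rewrite card_setD.
rewrite exchange_big; apply: leq_sum => i _.
have -> : (\sum_(p in P) (p ord0 i \in S i) = #|[set p in P | p ord0 i \in S i]|)%N.
  rewrite -sum1_card [RHS]big_mkcond [LHS]big_mkcond; apply: eq_bigr => p _.
  by rewrite !inE; case: (p \in P); case: (_ \in S i).
apply: leq_card_cover => p; rewrite inE => /andP [Pp pS]; exists (p ord0 i) => //.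
by rewrite inE Pp eqxx.
Qed.

Lemma double_count_agree (R : realType) (T : finType) n l (S : 'I_n -> {set T})
    (P : {set 'rV[T]_n}) (Z : {set 'I_n}) (g c : R) :
  (forall i, #|S i| <= l)%N -> 0 <= c ->
  (forall p, p \in P -> g <= (#|agree S p :\: Z|)%:R) ->
  (forall i s, i \in ~: Z -> (#|[set p in P | p ord0 i == s]|)%:R <= c) ->
  g * (#|P|)%:R <= (n * l)%:R * c.
Proof.
move=> S_le_l c_ge0 agree_outside card_fiber.
apply: (@le_trans _ _ ((\sum_(p in P) #|agree S p :\: Z|)%N)%:R).
  rewrite -sum1_card !natr_sum mulr_sumr; apply: ler_sum => p Pp.
  by rewrite mulr1; apply: agree_outside.
apply: le_trans (_ : ((\sum_(i in ~: Z) \sum_(s in S i)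
    #|[set p in P | p ord0 i == s]|)%N)%:R <= _); first by rewrite ler_nat sum_card_agree_setD.
rewrite natr_sum; apply: le_trans (_ : \sum_(i in ~: Z) (l%:R * c) <= _).
  apply: ler_sum => i Zi; rewrite natr_sum; apply: le_trans (_ : \sum_(s in S i) c <= _).
    by apply: ler_sum => s _; apply: card_fiber.
  by rewrite sumr_const -[_ *+ _]mulr_natl; apply: ler_wpM2r; rewrite ?ler_nat.
rewrite sumr_const -[_ *+ _]mulr_natl natrM -mulrA; apply: ler_wpM2r; first by rewrite mulr_ge0.
by rewrite ler_nat -[X in (_ <= X)%N](card_ord n) max_card.
Qed.

Definition zeros (F : finFieldType) n (v : 'rV[F]_n) : {set 'I_n} :=
  agree (fun=> [set 0]) v.

Section AffineAgreement.
Variables (R : realType) (F : finFieldType) (n l m0 : nat).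
Variables (S : 'I_n -> {set F}) (C : 'M[F]_(m0, n)) (z t : R).
Hypothesis S_le_l : forall i, (#|S i| <= l)%N.
Hypothesis C_zeros : forall v : 'rV[F]_n, (v <= C)%MS -> v != 0 -> (#|zeros v|)%:R < z.
Hypothesis z_lt_t : z < t.
Let D := (n * l)%:R / (t - z).
Hypothesis D_ge1 : 1 <= D.
Let D_ge0 : 0 <= D := le_trans ler01 D_ge1.

Definition agreeing_coset m (U : 'M[F]_(m, n)) (y : 'rV[F]_n) : {set 'rV[F]_n} :=
  [set p | ((p - y) <= U)%MS && (t <= (#|agree S p|)%:R)].

Lemma card_zero_cols_lt m (U : 'M[F]_(m, n)) : (U <= C)%MS -> U != 0 ->
  (#|[set i | col i U == 0]|)%:R < z.
Proof.
rewrite -submx0 => sUC /row_subPn [j]; rewrite submx0 => Uj_nz.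
apply: le_lt_trans (C_zeros (submx_trans (row_sub j U) sUC) Uj_nz).
rewrite ler_nat; apply/subset_leq_card/subsetP => i; rewrite !inE.
by move=> /eqP /matrixP /(_ j 0); rewrite !mxE => ->.
Qed.

Lemma agreeing_coset_fiber m (U : 'M[F]_(m, n)) y p0 i :
  p0 \in agreeing_coset U y ->
  [set p in agreeing_coset U y | p ord0 i == p0 ord0 i] \subset
    agreeing_coset (U :&: kermx (delta_mx i ord0 : 'M[F]_(n, 1)))%MS p0.
Proof.
rewrite inE => /andP [sp0 _]; apply/subsetP => p; rewrite !inE => /andP [/andP [sp ->] /eqP pi].
rewrite andbT sub_capmx; apply/andP; split.
  by rewrite -(subrKA y) addmx_sub // -opprB eqmx_opp.
by apply/sub_kermxP; rewrite -colE; apply/matrixP => a b; rewrite !mxE (ord1 a) pi subrr.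
Qed.

Lemma card_agreeing_coset r m (U : 'M[F]_(m, n)) y : \rank U = r -> (U <= C)%MS ->
  (#|agreeing_coset U y|)%:R <= D ^+ r.
Proof.
elim/ltn_ind: r m U y => r IH m U y rkU sUC.
have [U0 | U_nz] := eqVneq U 0.
  rewrite -rkU U0 mxrank0 expr0 -[1]/(1%:R) ler_nat -[X in (_ <= X)%N](cards1 y).
  by apply/subset_leq_card/subsetP => p; rewrite !inE => /andP [/submx0null /subr0_eq ->].
have r_gt0 : (0 < r)%N by rewrite -rkU lt0n mxrank_eq0.
set Z := [set i | col i U == 0]; set P := agreeing_coset U y.
have Z_lt_z := card_zero_cols_lt sUC U_nz.
have agree_outside p : p \in P -> t - z <= (#|agree S p :\: Z|)%:R.
  rewrite inE => /andP [_ t_le].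
  have : (#|agree S p| <= #|agree S p :\: Z| + #|Z|)%N.
    by rewrite -(cardsID Z (agree S p)) addnC leq_add2l subset_leq_card ?subsetIr.
  by rewrite -(ler_nat R) natrD; lra.
have card_fiber i s : i \in ~: Z -> (#|[set p in P | p ord0 i == s]|)%:R <= D ^+ r.-1.
  rewrite !inE => Ui_nz.
  have [-> | [p0]] := set_0Vmem [set p in P | p ord0 i == s].
    by rewrite cards0 exprn_ge0.
  rewrite inE => /andP [Pp0 /eqP <-].
  have rk_lt : (\rank (U :&: kermx (delta_mx i ord0 : 'M[F]_(n, 1)))%MS < r)%N.
    by rewrite -rkU mxrank_cap_ker_col_lt.
  apply: le_trans (le_trans _ (IH _ rk_lt _ _ p0 erefl (submx_trans (capmxSl _ _) sUC))) _.
    by rewrite ler_nat subset_leq_card // agreeing_coset_fiber.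
  by rewrite ler_weXn2l // -ltnS prednK.
have := double_count_agree S_le_l (exprn_ge0 r.-1 D_ge0) agree_outside card_fiber.
by rewrite -(prednK r_gt0) exprS {1}/D mulrAC ler_pdivlMr ?subr_gt0 // mulrC.
Qed.

Lemma card_agreeing_codewords d :
  ~~ [exists T : 'M[F]_(d.+1, n),
       [&& row_free T, [forall i, t <= (#|agree S (row i T)|)%:R] & (T <= C)%MS]] ->
  (#|[set v | (v <= C)%MS && (t <= (#|agree S v|)%:R)]|)%:R <= D ^+ d.
Proof.
move=> no_frame; set X := [set v | _].
pose A : 'M[F]_(#|X|, n) := \matrix_i (enum_val i : 'rV_n).
have rowA i : row i A = enum_val i by rewrite rowK.
have rowAX i : (row i A <= C)%MS && (t <= (#|agree S (row i A)|)%:R).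
  by have := enum_valP i; rewrite -rowA inE.
have sAC : (A <= C)%MS by apply/row_subP => i; case/andP: (rowAX i).
have rkA : (\rank A <= d)%N.
  rewrite leqNgt; apply: contra no_frame => d_lt_rk; apply/existsP.
  exists (rowsub (maxrankfun A \o widen_ord d_lt_rk) A); apply/and3P; split.
  - rewrite rowsub_comp; apply: row_free_rowsub (maxrowsub_free A) _.
    by move=> i j /(congr1 val) /= /val_inj.
  - apply/forallP => i; rewrite row_rowsub.
    by case/andP: (rowAX (maxrankfun A (widen_ord d_lt_rk i))).
  - by apply: submx_trans sAC; apply/row_subP => i; rewrite row_rowsub row_sub.
apply: le_trans (_ : (#|agreeing_coset A 0|)%:R <= _).
  rewrite ler_nat; apply/subset_leq_card/subsetP => v Xv; rewrite inE subr0.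
  move: (Xv); rewrite inE => /andP [_ ->]; rewrite andbT.
  by rewrite -(enum_rankK_in Xv Xv) -rowA row_sub.
apply: le_trans (card_agreeing_coset 0 erefl sAC) _.
by rewrite ler_weXn2l.
Qed.

End AffineAgreement.

Section RandomLinearCode.
Variables (R : realType) (F : finFieldType) (n k : nat).
Local Notation q := #|F|.
Let lnq : R := ln q%:R.
Let q_gt0 : (0 < q)%N := ltnW (card_finNzRing_gt1 F).

(* A code is handled through the row space of G^T, whose vectors are the
   transposed codewords G *m m. *)
Definition low_weight_codes (z : R) := [set G : 'M[F]_(n, k) |
  [exists v : 'rV_n, [&& (v <= G^T)%MS, v != 0 & z <= (#|zeros v|)%:R]]].

Definition agreeing_frame_codes (l : nat) (t : R) d := [set G : 'M[F]_(n, k) |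
  [exists S in lists F n l, exists T : 'M[F]_(d, n),
    [&& row_free T, [forall i, t <= (#|agree S (row i T)|)%:R] & (T <= G^T)%MS]]].

Lemma card_low_weight_codes z :
  (#|low_weight_codes z|)%:R <= expR (n%:R * ln 2 + (n%:R * k%:R + k%:R - z) * lnq).
Proof.
pose V := [set v : 'rV[F]_n | (v != 0) && (z <= (#|zeros v|)%:R)].
have card_V : (#|V|)%:R <= 2 ^+ n * expR ((n%:R - z) * lnq).
  have := @card_agree_ge _ n R (fun=> [set 0]) 1 z isT q_gt0 (fun i => eq_leq (cards1 _)).
  rewrite ln1 mulr0 add0r; apply: le_trans.
  by rewrite ler_nat; apply/subset_leq_card/subsetP => v; rewrite !inE => /andP [].
pose codes (v : 'rV[F]_n) := [set G : 'M[F]_(n, k) | (v <= G^T)%MS].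
have cover G : G \in low_weight_codes z -> exists2 v, v \in V & G \in codes v.
  by rewrite inE => /existsP [v /and3P [vG v_nz v_z]]; exists v; rewrite inE ?v_nz.
have card_codes v : v \in V -> (#|codes v|)%:R <= expR ((k%:R + n%:R * k%:R - n%:R) * lnq).
  rewrite inE => /andP [v_nz _]; have v_free : row_free v by rewrite /row_free rank_rV v_nz.
  by apply: le_trans (card_trmx_supmx R k v_free) _; rewrite !(mul1r, mulr1).
apply: le_trans (card_cover_ler cover card_codes) _.
apply: le_trans (ler_wpM2r (expR_ge0 _) card_V) _.
by rewrite exprn_expR // -!expRD ler_expR; lra.
Qed.

Lemma card_agreeing_frame_codes l t d : (0 < l)%N -> (l <= q)%N ->
  (#|agreeing_frame_codes l t d|)%:R <=
    expR ((n * l)%:R * lnq + d%:R * (n%:R * ln 2 + t * ln l%:R + (n%:R - t) * lnq)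
          + (d%:R * k%:R + n%:R * k%:R - n%:R * d%:R) * lnq).
Proof.
move=> l_gt0 l_le_q.
pose B S := [set v : 'rV[F]_n | t <= (#|agree S v|)%:R].
pose frames S := [set T : 'M[F]_(d, n) | row_free T && [forall i, row i T \in B S]].
pose codes S := [set G : 'M[F]_(n, k) | [exists T in frames S, (T <= G^T)%MS]].
pose EG := expR ((d%:R * k%:R + n%:R * k%:R - n%:R * d%:R) * lnq).
pose EB := 2 ^+ n * expR (t * ln l%:R + (n%:R - t) * lnq).
have card_frames S : S \in lists F n l -> (#|frames S|)%:R <= EB ^+ d.
  rewrite inE => /forallP S_l.
  apply: le_trans (_ : ((#|B S| ^ d)%N)%:R <= _).
    rewrite ler_nat; apply: leq_trans (card_rows_in d (B S)).
    by apply/subset_leq_card/subsetP => T; rewrite !inE => /andP [].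
  rewrite natrX lerXn2r ?nnegrE ?ler0n ?mulr_ge0 ?exprn_ge0 ?expR_ge0 //.
  by apply: card_agree_ge => // i; rewrite (eqP (S_l i)).
have card_codes S : S \in lists F n l -> (#|codes S|)%:R <= EB ^+ d * EG.
  move=> /card_frames frames_le.
  pose supsets (T : 'M[F]_(d, n)) := [set G : 'M[F]_(n, k) | (T <= G^T)%MS].
  have cover G : G \in codes S -> exists2 T, T \in frames S & G \in supsets T.
    by rewrite inE => /existsP [T /andP [TS TG]]; exists T => //; rewrite inE.
  have card_supsets T : T \in frames S -> (#|supsets T|)%:R <= EG.
    by rewrite inE => /andP [T_free _]; apply: card_trmx_supmx.
  apply: le_trans (card_cover_ler cover card_supsets) _.
  by apply: ler_wpM2r; rewrite ?expR_ge0.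
have card_lists_le : (#|lists F n l|)%:R <= expR ((n * l)%:R * lnq).
  rewrite card_lists natrX; apply: le_trans (_ : (q%:R ^+ l) ^+ n <= _).
    by rewrite lerXn2r ?nnegrE ?ler0n ?exprn_ge0 // -natrX ler_nat bin_leq_expn.
  by rewrite -exprM exprn_expR ?ltr0n // mulnC.
have cover G : G \in agreeing_frame_codes l t d -> exists2 S, S \in lists F n l & G \in codes S.
  rewrite inE => /existsP [S /andP [S_l /existsP [T /and3P [T_free TB TG]]]].
  exists S => //; rewrite inE; apply/existsP; exists T; rewrite TG andbT inE T_free.
  by apply/forallP => i; rewrite inE (forallP TB i).
apply: le_trans (card_cover_ler cover card_codes) _.
apply: le_trans (ler_wpM2r _ card_lists_le) _; first by rewrite !(mulr_ge0, exprn_ge0, expR_ge0).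
by rewrite /EB /EG [2 ^+ n]exprn_expR // -expRD -expRM_natl -!expRD !addrA.
Qed.

End RandomLinearCode.

Arguments low_weight_codes {R F n k} z.
Arguments agreeing_frame_codes {R F n k} l t d.

Lemma list_recoverableW (R : realType) (F : finFieldType) n (rho L1 L2 : R) l
    (C : {set 'cV[F]_n}) :
  L1 <= L2 -> list_recoverable rho l L1 C -> list_recoverable rho l L2 C.
Proof.
move=> L12 /forallP C_L1; apply/forallP => S; apply/implyP => S_l.
exact: le_trans (implyP (C_L1 S) S_l) L12.
Qed.

Lemma list_recoverable_col_span (R : realType) (F : finFieldType) n k (G : 'M[F]_(n, k))
    (rho t z : R) l d :
  t <= (1 - rho) * n%:R -> z < t -> 1 <= (n * l)%:R / (t - z) ->
  G \notin low_weight_codes z -> G \notin agreeing_frame_codes l t d.+1 ->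
  list_recoverable rho l (((n * l)%:R / (t - z)) ^+ d) (col_span_code G).
Proof.
move=> t_le z_lt_t D_ge1; rewrite !inE => /existsPn not_low /existsPn not_frame.
apply/forallP => S; apply/implyP => /forallP S_l.
have S_le_l i : (#|S i| <= l)%N by rewrite (eqP (S_l i)).
have G_zeros v : (v <= G^T)%MS -> v != 0 -> (#|zeros v|)%:R < z.
  by move=> vG v_nz; have := not_low v; rewrite vG v_nz /= real_ltNge ?num_real.
apply: le_trans (card_agreeing_codewords S_le_l G_zeros z_lt_t D_ge1 _).
  rewrite ler_nat -(card_imset _ (@trmx_inj _ n 1)); apply/subset_leq_card/subsetP.
  move=> y /imsetP [x]; rewrite inE => /andP [/imsetP [m _ ->] x_ball] ->.
  rewrite inE trmx_mul submxMl (le_trans t_le) //; move: x_ball => /le_trans; apply.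
  by rewrite ler_nat -trmx_mul; apply: eq_leq; apply: eq_card => i; rewrite !inE !mxE.
have S_in : S \in lists F n l by rewrite inE; apply/forallP.
by apply/negP => frame; have := not_frame S; rewrite S_in frame.
Qed.

Lemma list_recoverable_col_span_eps (R : realType) (F : finFieldType) n k (G : 'M[F]_(n, k))
    (r eps : R) l :
  0 < eps -> eps <= 1 -> (0 < n)%N -> (0 < l)%N ->
  G \notin low_weight_codes ((r + eps / 2) * n%:R) ->
  G \notin agreeing_frame_codes l ((r + eps) * n%:R) (Num.truncn (2 * l%:R / eps)).+1 ->
  list_recoverable (1 - r - eps) l ((2 * l%:R / eps) `^ (2 * l%:R / eps)) (col_span_code G).
Proof.
move=> eps_gt0 eps_le1 n_gt0 l_gt0 not_low not_frame; set D := 2 * l%:R / eps.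
have n_pos : 0 < n%:R :> R by rewrite ltr0n.
have D_ge1 : 1 <= D.
  have : 1 <= l%:R :> R by rewrite ler1n.
  by rewrite /D ler_pdivlMr // mul1r; lra.
have gap : (r + eps) * n%:R - (r + eps / 2) * n%:R = eps * n%:R / 2 by field.
have DE : (n * l)%:R / ((r + eps) * n%:R - (r + eps / 2) * n%:R) = D.
  by rewrite gap /D natrM; field; rewrite !gt_eqF.
have t_le : (r + eps) * n%:R <= (1 - (1 - r - eps)) * n%:R.
  by have -> : 1 - (1 - r - eps) = r + eps by ring.
have z_lt_t : (r + eps / 2) * n%:R < (r + eps) * n%:R by rewrite ltr_pM2r //; lra.
have := list_recoverable_col_span t_le z_lt_t _ not_low not_frame.
rewrite DE => /(_ D_ge1); apply: list_recoverableW.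
rewrite -powR_mulrn ?(le_trans ler01) // ler_powR // truncn_le.
exact: le_trans ler01 D_ge1.
Qed.

Lemma ln_field_size_bounds (R : realType) (r eps Q : R) l : 0 < eps -> (0 < l)%N -> 0 < Q ->
    l%:R `^ (8 * r / eps + 6) <= Q -> l%:R * 2 `^ (4 / eps) <= Q ->
  [/\ (8 * r + 6 * eps) * ln (l%:R : R) <= eps * ln Q,
      eps * ln (l%:R : R) + 4 * ln 2 <= eps * ln Q
    & 4 * ln 2 <= eps * ln Q].
Proof.
move=> eps_gt0 l_gt0 Q_gt0 Q_ge1 Q_ge2; have l_pos : (0 < l%:R :> R) by rewrite ltr0n.
have eps_neq0 : eps != 0 by rewrite gt_eqF.
have eps_lnl_ge0 : 0 <= eps * ln (l%:R : R) by rewrite mulr_ge0 ?ln_ge0 ?ler1n // ltW.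
rewrite -ler_ln ?posrE ?powR_gt0 // ln_powR in Q_ge1.
rewrite -ler_ln ?posrE ?mulr_gt0 ?powR_gt0 // lnM ?posrE ?powR_gt0 // ln_powR in Q_ge2.
have := ler_wpM2l (ltW eps_gt0) Q_ge1; have := ler_wpM2l (ltW eps_gt0) Q_ge2.
have -> : eps * ((8 * r / eps + 6) * ln l%:R) = (8 * r + 6 * eps) * ln l%:R by field.
have -> : eps * (ln l%:R + 4 / eps * ln 2) = eps * ln l%:R + 4 * ln 2 by field.
by split; lra.
Qed.

Lemma card_low_weight_codes_le (R : realType) (F : finFieldType) n k (r eps : R) :
  k%:R = r * n%:R -> 4 * ln 2 <= eps * ln (#|F|%:R : R) ->
  (#|low_weight_codes (F := F) (n := n) (k := k) ((r + eps / 2) * n%:R)|)%:R <=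
    (#|F|%:R : R) `^ (- (eps * n%:R / 8)) * (#|F|%:R : R) ^+ (n * k).
Proof.
move=> k_eq ln2_le; have q_gt0 : (0 < #|F|%:R :> R) by rewrite ltr0n ltnW ?card_finNzRing_gt1.
apply: le_trans (card_low_weight_codes F n k _) _.
rewrite /powR gt_eqF // exprn_expR // -expRD ler_expR natrM k_eq.
have ln2_ge0 : 0 <= ln (2 : R) by rewrite ln_ge0 ?ler1n.
have n_ge0 : 0 <= n%:R :> R := ler0n _ _.
nra.
Qed.

Lemma card_agreeing_frame_codes_le (R : realType) (F : finFieldType) n k (r eps : R) l :
  0 < eps -> 0 <= r -> k%:R = r * n%:R -> (0 < l)%N ->
  (8 * r + 6 * eps) * ln (l%:R : R) <= eps * ln (#|F|%:R : R) ->
  eps * ln (l%:R : R) + 4 * ln 2 <= eps * ln (#|F|%:R : R) ->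
  (#|agreeing_frame_codes (F := F) (n := n) (k := k) l ((r + eps) * n%:R)
      (Num.truncn (2 * l%:R / eps)).+1|)%:R <=
    (#|F|%:R : R) `^ (- (eps * n%:R / 8)) * (#|F|%:R : R) ^+ (n * k).
Proof.
move=> eps_gt0 r_ge0 k_eq l_gt0 ln_l_le ln2_le.
set lnq := ln (#|F|%:R : R) in ln_l_le ln2_le *; set lnl := ln (l%:R : R) in ln_l_le ln2_le *.
set d := (Num.truncn _).+1.
have q_gt0 : (0 < #|F|)%N := ltnW (card_finNzRing_gt1 F).
have ln2_ge0 : 0 <= ln (2 : R) by rewrite ln_ge0 ?ler1n.
have lnl_ge0 : 0 <= lnl by rewrite ln_ge0 ?ler1n.
have l_le_q : (l <= #|F|)%N.
  rewrite -(ler_nat R) -ler_ln ?posrE ?ltr0n ?q_gt0 // -/lnl -/lnq -(ler_pM2l eps_gt0); lra.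
apply: le_trans (card_agreeing_frame_codes n k _ _ l_gt0 l_le_q) _.
rewrite /powR gt_eqF ?ltr0n // exprn_expR ?ltr0n // -expRD ler_expR !natrM k_eq.
have l_lt_d : 2 * l%:R < eps * d%:R.
  by rewrite -ltr_pdivrMl // mulrC; apply: truncnS_gt.
have d_ge1 : 1 <= d%:R :> R by rewrite ler1n.
(* The exponent of the bound, relative to q ^ (n k), per coordinate. *)
have per_coord : l%:R * lnq + d%:R * ln 2 + d%:R * (r + eps) * lnl - d%:R * eps * lnq
    <= - (eps * lnq) / 8.
  have lnq_ge0 : 0 <= lnq by rewrite ln_ge0 // ler1n.
  have rate_le : 8 * (r + eps) * lnl + 8 * ln 2 <= 3 * (eps * lnq) by lra.
  have := ler_wpM2l (ler0n _ d) rate_le.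
  have := ler_wpM2l lnq_ge0 (ltW l_lt_d).
  have : 0 <= (eps * lnq) * (d%:R - 1) by rewrite mulr_ge0 ?subr_ge0 // mulr_ge0 // ltW.
  lra.
have := ler_wpM2l (ler0n _ n) per_coord.
rewrite -/lnq -/lnl; lra.
Qed.

Theorem theorem3p1 (R : realType) (F : finFieldType) (r eps : R) (l n k : nat) :
  0 < r -> r < 1 -> 0 < eps -> 0 < 1 - r - eps -> (0 < l)%N ->
  l%:R `^ (8 * r / eps + 6) <= (#|F|)%:R ->
  l%:R * 2 `^ (4 / eps) <= (#|F|)%:R ->
  k%:R = r * n%:R ->
  1 - 2 * (#|F|)%:R `^ (- (eps * n%:R / 8)) <=
  (#|[set G : 'M[F]_(n, k) |
       list_recoverable (1 - r - eps) l ((2 * l%:R / eps) `^ (2 * l%:R / eps))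
         (col_span_code G)]|)%:R
  / (#|{: 'M[F]_(n, k)}|)%:R.
Proof.
move=> r_gt0 r_lt1 eps_gt0 rho_gt0 l_gt0 q_ge1 q_ge2 k_eq.
have Q_gt0 : (0 < #|F|%:R :> R) by rewrite ltr0n ltnW ?card_finNzRing_gt1.
have [-> | n_gt0] := posnP n.
  rewrite mulr0 mul0r oppr0 powRr0 mulr1; apply: le_trans (divr_ge0 (ler0n _ _) (ler0n _ _)).
  lra.
have [ln_l_le ln2_l_le ln2_le] := ln_field_size_bounds eps_gt0 l_gt0 Q_gt0 q_ge1 q_ge2.
set Good := [set G | _].
pose low := low_weight_codes (F := F) (n := n) (k := k) ((r + eps / 2) * n%:R).
pose frame := agreeing_frame_codes (F := F) (n := n) (k := k) l ((r + eps) * n%:R)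
  (Num.truncn (2 * l%:R / eps)).+1.
have good G : G \notin low -> G \notin frame -> G \in Good.
  move=> not_low not_frame; rewrite inE.
  by apply: list_recoverable_col_span_eps not_low not_frame => //; lra.
have := card_low_weight_codes_le k_eq ln2_le.
have := card_agreeing_frame_codes_le eps_gt0 (ltW r_gt0) k_eq l_gt0 ln_l_le ln2_l_le.
have := leq_card_cover3 good.
by rewrite -(ler_nat R) !natrD card_mx natrX ler_pdivlMr ?exprn_gt0 //; lra.
Qed.
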